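(* Let $q\in\mathbb{K}$ be a primitive $\ell$-th root of unity with $\ell>1$ odd, and $n\ge1$. For $a\in K^i_{d_1}(n)$ and $b\in K^j_{d_2}(n)$, \[ \kappa(ab)=q^j\kappa(a)b+(-q^{-1})^{d_1-i}a\kappa(b). \] For $a\in\Omega^i_{d_1}(n)$ and $b\in\Omega^j_{d_2}(n)$, \[ \delta(ab)=q^{d_2-j}\delta(a)b+(-q^{-1})^ia\delta(b). \]
   Context: Quantum polynomial functors: for $q\in\mathbb{K}^\times$, $\mathcal{H}_d$ is the Hecke algebra with generators $T_1,\dots,T_{d-1}$, relations $T_iT_j=T_jT_i$ ($|i-j|>1$), $T_iT_{i+1}T_i=T_{i+1}T_iT_{i+1}$, $(T_i-q)(T_i+q^{-1})=0$, basis $T_w$, $w\in\mathfrak{S}_d$. $V_n=\mathbb{K}^n$ with basis $e_1,\dots,e_n$; $T_i$ acts on $V_n^{\otimes d}$ by $R_n$ in positions $i,i+1$, where $R_n(e_i\otimes e_j)=e_j\otimes e_i$ ($i<j$), $q\,e_i\otimes e_i$ ($i=j$), $(q-q^{-1})e_i\otimes e_j+e_j\otimes e_i$ ($i>j$). $\mathcal{P}^d_q$ is the category of $\mathbb{K}$-linear functors from the category with objects $V_n^{\otimes d}$ and $\mathcal{H}_d$-linear maps to finite-dimensional vector spaces, $F(n):=F(V_n^{\otimes d})$. $\mathcal{P}_q$ is braided monoidal with $(F\otimes G)(n)=F(n)\otimes G(n)$ and braiding $R_{F,G}:F\otimes G\to G\otimes F$ uniquely determined by $R_{I,I}(n)=R_n$,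 naturality in $F,G$, unit compatibility and the hexagon identities. $S^*_q(n)$: algebra generated by $e_1,\dots,e_n$ in degree 1 with $e_je_i=qe_ie_j$ ($i<j$); $\Lambda^*_q(n)$: generated with $e_j\wedge e_i=-q^{-1}e_i\wedge e_j$ ($i<j$), $e_i\wedge e_i=0$; their degree-$d$ parts define quotient functors $S^d_q,\Lambda^d_q$ of $I^{\otimes d}$, with products $\mu$. The action of $\sum_\sigma q^{l(\sigma)}T_\sigma$ (resp. $\sum_\sigma(-q^{-1})^{l(\sigma)}T_\sigma$), over $(i,j)$-shuffles $\sigma$, on $I^{\otimes i+j}$ descends to $\Delta^{(i,j)}:S^{i+j}_q\to S^i_q\otimes S^j_q$ (resp. $\Lambda^{i+j}_q\to\Lambda^i_q\otimes\Lambda^j_q$). Set $\Omega^i_d=S^{d-i}_q\otimes\Lambda^i_q$ and $K^i_d=\Omega^{d-i}_d=S^i_q\otimes\Lambda^{d-i}_q$. $\delta:\Omega^i_d\to\Omega^{i+1}_d$ is $(1\otimes\mu)(\Delta^{(d-i-1,1)}\otimes1)$ and $\kappa:K^i_d\to K^{i+1}_d$ is $(\mu\otimes1)(1\otimes\Delta^{(1,d-i-1)})$, using $S^1_q=\Lambda^1_q=I$. The product on $\Omega=K=\bigoplus S^a_q\otimes\Lambda^b_q$ is $(a\otimes b)(c\otimes d)=(\mu\otimes\mu)(a\otimes R(b\otimes c)\otimes d)$. *)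

(* Concrete model of the objects of Proposition 5.3,
   evaluated at a fixed n : everything is computed on V_n^{(x) d}
   (tensors = coefficient functions on words), and the quotients
   S^a_q(n) (x) Lambda^b_q(n) are handled as congruence modulo the
   defining relations. *)
From HB Require Import structures.
From mathcomp Require Import all_boot all_order all_algebra.
Set Implicit Arguments. Unset Strict Implicit. Unset Printing Implicit Defensive.
Import Order.TTheory GRing.Theory Num.Theory.
Local Open Scope ring_scope.

Section QuantumKoszul.
Variables (K : fieldType) (q : K) (n : nat).

(* An element of V_n^{(x) d}: coefficient of e_{w_1} (x) ... (x) e_{w_d}
   for each word w of length d (values on other words are ignored). *)
Definition tens := seq 'I_n -> K.

Definition tz : tens := fun _ => 0.

Definition ev (w : seq 'I_n) : tens := fun u => (u == w)%:R.

(* R_n acting on letters p, p+1 (0-indexed) of the basis tensor e_w *)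
Definition Rpos (p : nat) (w : seq 'I_n) : tens :=
  match drop p w with
  | i :: j :: r =>
      let sw := take p w ++ j :: i :: r in
      if (i < j)%N then ev sw
      else if i == j then (fun u => q * ev w u)
      else (fun u => (q - q^-1) * ev w u + ev sw u)
  | _ => ev w
  end.

(* The Hecke generator T_{p+1} on V_n^{(x) d} *)
Definition Top (d p : nat) (x : tens) : tens :=
  fun u => \sum_(w : d.-tuple 'I_n) x w * Rpos p w u.

(* moving the strand at position pos to the right through s strands:
   R at positions pos, pos+1, ..., pos+s-1 (applied in this order) *)
Fixpoint moveR (d pos s : nat) (x : tens) : tens :=
  match s with
  | 0 => x
  | s'.+1 => moveR d pos.+1 s' (Top d pos x)
  end.

(* braiding R_{I^{(x)r}, I^{(x)s}} on the block of positions p..p+r+s-1,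
   obtained from R_{I,I} = R_n by the hexagon identities *)
Fixpoint braid (d p r s : nat) (x : tens) : tens :=
  match r with
  | 0 => x
  | r'.+1 => braid d p r' s (moveR d (p + r') s x)
  end.

Definition tensor (D : nat) (x y : tens) : tens :=
  fun u => x (take D u) * y (drop D u).

(* product S^p(x)L^r times S^s(x)L^t -> S^{p+s}(x)L^{r+t}, on lifts:
   (mu (x) mu)(1 (x) R_{L^r,S^s} (x) 1); mu is the quotient map *)
Definition Kmul (p r s t : nat) (x y : tens) : tens :=
  braid (p + r + s + t) p r s (tensor (p + r) x y).

Fixpoint pullL (d s k : nat) (x : tens) : tens :=
  match k with
  | 0 => x
  | k'.+1 => pullL d s k' (Top d (s + k') x)
  end.

Fixpoint pushR (d s k : nat) (x : tens) : tens :=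
  match k with
  | 0 => x
  | k'.+1 => pushR d s k' (Top d (s - k'.+2) x)
  end.

(* kappa : S^s (x) L^m -> S^{s+1} (x) L^{m-1},
   (mu (x) 1)(1 (x) Delta^{(1,m-1)}), where Delta^{(1,m-1)} is the action of
   sum over (1,m-1)-shuffles sigma of (-q^-1)^{l(sigma)} T_sigma
   (sigma = s_1 s_2 ... s_k, k < m) on the Lambda-block; 0 if m = 0. *)
Definition kappa (s m : nat) (x : tens) : tens :=
  if m is 0 then tz else
  fun u => \sum_(k < m) (- q^-1) ^+ k * pullL (s + m) s k x u.

(* delta : S^s (x) L^m -> S^{s-1} (x) L^{m+1},
   (1 (x) mu)(Delta^{(s-1,1)} (x) 1), Delta^{(s-1,1)} = action of
   sum over (s-1,1)-shuffles sigma of q^{l(sigma)} T_sigma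
   (sigma = s_{s-1} ... s_{s-k}, k < s) on the S-block; 0 if s = 0. *)
Definition delta (s m : nat) (x : tens) : tens :=
  if s is 0 then tz else
  fun u => \sum_(k < s) q ^+ k * pushR (s + m) s k x u.

(* Generators of the kernel of V^{(x)(a+b)} -> S^a_q(n) (x) Lambda^b_q(n):
   e_u (x) rel (x) e_v with rel a defining relation of S^*_q placed inside
   the first a slots, or of Lambda^*_q inside the last b slots.
   relgen a b w p : relation at letters p,p+1 of the word w. *)
Definition relgen (a b : nat) (w : seq 'I_n) (p : nat) : tens :=
  match drop p w with
  | i :: j :: r =>
      let sw := take p w ++ j :: i :: r in
      if (p.+2 <= a)%N then
        (if (i < j)%N then (fun u => ev sw u - q * ev w u) else tz)
      else if (a <= p)%N && (p.+2 <= a + b)%N then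
        (if (i < j)%N then (fun u => ev sw u + q^-1 * ev w u)
         else if i == j then ev w else tz)
      else tz
  | _ => tz
  end.

(* x and y (tensors of degree a+b) have the same image in
   S^a_q(n) (x) Lambda^b_q(n) : their difference lies in the span
   of the relation generators. *)
Definition cong (a b : nat) (x y : tens) : Prop :=
  exists c : (a + b).-tuple 'I_n -> nat -> K,
    forall u : (a + b).-tuple 'I_n,
      x u - y u = \sum_(w : (a + b).-tuple 'I_n)
                    \sum_(p < a + b) c w p * relgen a b w p u.

End QuantumKoszul.

(** Expanding kappa(ab) over
    the (1, m-1)-shuffles, a shuffle that pulls out a strand of the Lambda-part
    of a is, by naturality of the braiding, the corresponding shuffle term of
    kappa(a) b followed by moving one symmetric strand across the j symmetric
    strands of b; a shuffle pulling out a strand of the Lambda-part of b is, by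
    the hexagon identity, a shuffle term of a kappa(b), reached after the
    d1 - i strands of a have been passed.  Modulo the defining relations a
    crossing of two symmetric strands acts by q and a crossing of two exterior
    strands by -q^-1, which produces the coefficients q^j and (-q^-1)^(d1-i).
    The argument for delta is the mirror image. *)

From HB Require Import structures.
From mathcomp Require Import all_boot all_order all_algebra.
From mathcomp Require Import ring zify.
From Stdlib Require Import FunctionalExtensionality.
Set Implicit Arguments. Unset Strict Implicit. Unset Printing Implicit Defensive.
Import Order.TTheory GRing.Theory Num.Theory.
Local Open Scope ring_scope.

Section HeckeGenerators.
Variables (K : fieldType) (q : K) (n : nat).
Local Notation word := (seq 'I_n).
Local Notation tens := (tens K n).

Definition swap_at (p : nat) (u : word) : word :=
  if drop p u is i :: j :: r then take p u ++ j :: i :: r else u.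

(* [rdiag i j] is the coefficient of e_i (x) e_j in R_n (e_i (x) e_j); the
   coefficient of e_i (x) e_j in R_n (e_j (x) e_i) is [i != j]. *)
Definition rdiag (i j : 'I_n) : K :=
  if (i < j)%N then 0 else if i == j then q else q - q^-1.

Definition diag_coef (p : nat) (u : word) : K :=
  if drop p u is i :: j :: _ then rdiag i j else 1.

Definition swap_coef (p : nat) (u : word) : K :=
  if drop p u is i :: j :: _ then (i != j)%:R else 0.

Variant word_at_spec (p : nat) (u : word) : Prop :=
  | WordAt pre (i j : 'I_n) r of size pre = p & u = pre ++ i :: j :: r
  | WordShort of (size u <= p.+1)%N.

Lemma word_atP p u : word_at_spec p u.
Proof.
case: (ltnP p.+1 (size u)) => hu; last exact: WordShort.
case E: (drop p u) => [|i [|j r]]; try by move: (congr1 size E); rewrite size_drop /=; lia.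
apply: (WordAt (pre := take p u) (i := i) (j := j) (r := r)); last by rewrite -E cat_take_drop.
by rewrite size_take; case: ifP => //; lia.
Qed.

Section AtPosition.
Variables (p : nat) (pre : word) (i j : 'I_n) (r : word).
Hypothesis size_pre : size pre = p.

Lemma swap_at_cat : swap_at p (pre ++ i :: j :: r) = pre ++ j :: i :: r.
Proof. by rewrite /swap_at -size_pre drop_size_cat // take_size_cat. Qed.

Lemma diag_coef_cat : diag_coef p (pre ++ i :: j :: r) = rdiag i j.
Proof. by rewrite /diag_coef -size_pre drop_size_cat. Qed.

Lemma swap_coef_cat : swap_coef p (pre ++ i :: j :: r) = (i != j)%:R.
Proof. by rewrite /swap_coef -size_pre drop_size_cat. Qed.

End AtPosition.

Section Short.
Variables (p : nat) (u : word).
Hypothesis short_u : (size u <= p.+1)%N.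

Let drop_short : exists2 s, drop p u = s & (size s <= 1)%N.
Proof. by exists (drop p u); rewrite // size_drop; lia. Qed.

Lemma swap_at_short : swap_at p u = u.
Proof. by case: drop_short => [[|? [|? ?]] E] //; rewrite /swap_at E. Qed.

Lemma diag_coef_short : diag_coef p u = 1.
Proof. by case: drop_short => [[|? [|? ?]] E] //; rewrite /diag_coef E. Qed.

Lemma swap_coef_short : swap_coef p u = 0.
Proof. by case: drop_short => [[|? [|? ?]] E] //; rewrite /swap_coef E. Qed.

End Short.

Lemma size_swap_at p u : size (swap_at p u) = size u.
Proof.
by case: (word_atP p u) => [pre i j r hp ->|hs]; rewrite ?swap_at_cat ?swap_at_short // !size_cat.
Qed.

Lemma swap_atK p : involutive (swap_at p).
Proof.
move=> u; case: (word_atP p u) => [pre i j r hp ->|hs]; first by rewrite !swap_at_cat.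
by rewrite !swap_at_short.
Qed.

Lemma swap_coef_swap_at p u : swap_coef p (swap_at p u) = swap_coef p u.
Proof.
case: (word_atP p u) => [pre i j r hp ->|hs]; last by rewrite swap_at_short.
by rewrite swap_at_cat // !swap_coef_cat // eq_sym.
Qed.

Lemma sum_ev d (F : word -> K) (u : word) :
  \sum_(w : d.-tuple 'I_n) F w * ev K w u = if size u == d then F u else 0.
Proof.
rewrite /ev; case: eqP => hu.
- pose t : d.-tuple 'I_n := Tuple (introT eqP hu).
  rewrite (bigD1 t) //= eqxx mulr1 big1 ?addr0 // => w hw.
  case: eqP => [E|]; last by rewrite mulr0.
  by move: hw; rewrite (_ : w = t) ?eqxx //; apply: val_inj; rewrite /= -E.
- apply: big1 => w _; case: eqP => [E|]; last by rewrite mulr0.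
  by rewrite E size_tuple in hu.
Qed.

Lemma sum_ev_swap d p (F : word -> K) (u : word) :
  \sum_(w : d.-tuple 'I_n) F w * ev K (swap_at p w) u
  = if size u == d then F (swap_at p u) else 0.
Proof.
have ev_swap w : ev K (swap_at p w) u = ev K w (swap_at p u).
  by rewrite /ev; congr (nat_of_bool _)%:R; apply/eqP/eqP => [->|<-]; rewrite swap_atK.
by under eq_bigr do rewrite ev_swap; rewrite sum_ev size_swap_at.
Qed.

Lemma Rpos_ev p w u :
  Rpos q p w u = diag_coef p w * ev K w u + swap_coef p w * ev K (swap_at p w) u.
Proof.
rewrite /Rpos /diag_coef /swap_coef /swap_at /ev /rdiag.
case: (drop p w) => [|i [|j r]] /=; rewrite ?mul1r ?mul0r ?addr0 // -(inj_eq val_inj) /=.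
by case: ltngtP => [hij|hij|/val_inj->]; rewrite ?eqxx /= ?mul0r ?mul1r ?add0r ?addr0.
Qed.

Lemma TopE d p (x : tens) u : Top q d p x u =
  if size u == d then diag_coef p u * x u + swap_coef p u * x (swap_at p u) else 0.
Proof.
rewrite /Top; under eq_bigr do rewrite Rpos_ev mulrDr !mulrA.
rewrite big_split /= (sum_ev d (fun w => x w * diag_coef p w)).
rewrite (sum_ev_swap d p (fun w => x w * swap_coef p w)).
case: eqP => _; last by rewrite addr0.
by rewrite swap_coef_swap_at mulrC (mulrC (x _)).
Qed.

Lemma Top_off d p (x : tens) (u : word) : size u != d -> Top q d p x u = 0.
Proof. by rewrite TopE => /negbTE->. Qed.

Lemma Top_short d p (x : tens) (u : word) : (size u <= p.+1)%N ->
  Top q d p x u = if size u == d then x u else 0.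
Proof. by move=> hu; rewrite TopE diag_coef_short // swap_coef_short // mul1r mul0r addr0. Qed.

Section LocalForms.
Variables (d : nat) (x : tens).

Lemma Top_cat pre (i j : 'I_n) r : (size pre + size r)%N.+2 = d ->
  Top q d (size pre) x (pre ++ i :: j :: r)
  = rdiag i j * x (pre ++ i :: j :: r) + (i != j)%:R * x (pre ++ j :: i :: r).
Proof.
move=> hd; rewrite TopE diag_coef_cat // swap_coef_cat // swap_at_cat //.
by rewrite size_cat /= !addnS hd eqxx.
Qed.

Lemma Top_cat_next pre (a b c : 'I_n) r : (size pre + size r)%N.+3 = d ->
  Top q d (size pre).+1 x (pre ++ a :: b :: c :: r)
  = rdiag b c * x (pre ++ a :: b :: c :: r) + (b != c)%:R * x (pre ++ a :: c :: b :: r).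
Proof.
have E s : pre ++ a :: s = (pre ++ [:: a]) ++ s by rewrite -catA.
have -> : (size pre).+1 = size (pre ++ [:: a]) by rewrite size_cat addn1.
by move=> hd; rewrite !(E (_ :: _ :: r)) Top_cat // size_cat addn1.
Qed.

Lemma Top_cat_far pre (i j k l : 'I_n) mid r : (size pre + size mid + size r)%N.+4 = d ->
  Top q d (size pre + (size mid).+2)%N x (pre ++ i :: j :: mid ++ k :: l :: r)
  = rdiag k l * x (pre ++ i :: j :: mid ++ k :: l :: r)
    + (k != l)%:R * x (pre ++ i :: j :: mid ++ l :: k :: r).
Proof.
have E s : pre ++ i :: j :: mid ++ s = (pre ++ i :: j :: mid) ++ s by rewrite -catA.
have -> : (size pre + (size mid).+2)%N = size (pre ++ i :: j :: mid) by rewrite size_cat.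
by move=> hd; rewrite !(E (_ :: _ :: r)) Top_cat // size_cat /=; lia.
Qed.

End LocalForms.

Lemma Top_commute d p p' (x : tens) : (p.+2 <= p')%N ->
  Top q d p (Top q d p' x) = Top q d p' (Top q d p x).
Proof.
move=> hpp'; apply: functional_extensionality => u.
case: (eqVneq (size u) d) => hu; last by rewrite !Top_off.
case: (word_atP p' u) => [pre' k l r hp' Eu|hs]; last first.
  have hs' : (size (swap_at p u) <= p'.+1)%N by rewrite size_swap_at.
  rewrite [RHS](Top_short d _ hs) hu eqxx !TopE hu size_swap_at hu eqxx.
  rewrite (diag_coef_short hs) (swap_coef_short hs) (diag_coef_short hs') (swap_coef_short hs').
  by rewrite (swap_at_short hs) (swap_at_short hs'); ring.
case: (word_atP p pre') => [pre i j mid hp Epre|hs]; last by lia.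
subst u pre' p p'; rewrite -catA /= in hu *.
have hd : (size pre + size mid + size r)%N.+4 = d.
  by move: hu; rewrite !size_cat /= size_cat /=; lia.
have hd_kl : (size pre + size (mid ++ k :: l :: r))%N.+2 = d by rewrite -hd size_cat /=; lia.
have hd_lk : (size pre + size (mid ++ l :: k :: r))%N.+2 = d by rewrite -hd size_cat /=; lia.
by rewrite size_cat /= Top_cat_far // !Top_cat // !Top_cat_far //; ring.
Qed.

Hypothesis q_neq0 : q != 0.

Lemma Top_braid d p (x : tens) : (p.+3 <= d)%N ->
  Top q d p (Top q d p.+1 (Top q d p x)) = Top q d p.+1 (Top q d p (Top q d p.+1 x)).
Proof.
move=> hpd; apply: functional_extensionality => u.
case: (eqVneq (size u) d) => hu; last by rewrite !Top_off.
case: (word_atP p u) => [pre i j r0 hp Eu|hs]; last by lia.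
subst u p; case: r0 hu hpd => [|k r] hu hpd; rewrite size_cat /= in hu; first by lia.
have hd3 : (size pre + size r)%N.+3 = d by lia.
have hd2 : (size pre + (size r).+1)%N.+2 = d by lia.
do 2 rewrite !Top_cat // !Top_cat_next //.
(* the Yang-Baxter equation for R_n, checked for each relative order of i, j, k *)
rewrite /rdiag -!(inj_eq val_inj) /=.
case: (ltngtP i j) => [?|?|/val_inj ?]; subst;
  try case: (ltngtP j k) => [?|?|/val_inj ?]; subst;
  try case: (ltngtP i k) => [?|?|/val_inj ?]; subst;
  rewrite ?eqxx ?ltnn /=; try lia.
all: by field.
Qed.

End HeckeGenerators.

Section BraidCalculus.
Variables (K : fieldType) (q : K) (n d : nat).
Local Notation tens := (tens K n).
Local Notation T := (Top q d).
Local Notation moveR := (moveR q d).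
Local Notation braid := (braid q d).
Local Notation pullL := (pullL q d).

Lemma moveR_S pos s (x : tens) : moveR pos s.+1 x = moveR pos.+1 s (T pos x).
Proof. by []. Qed.

Lemma braid_S p r s (x : tens) : braid p r.+1 s x = braid p r s (moveR (p + r) s x).
Proof. by []. Qed.

Lemma pullL_S s k (x : tens) : pullL s k.+1 x = pullL s k (T (s + k) x).
Proof. by []. Qed.

Lemma Top_commute_far p p' (x : tens) : (p.+2 <= p')%N || (p'.+2 <= p)%N ->
  T p (T p' x) = T p' (T p x).
Proof. by case/orP => ?; [|symmetry]; apply: Top_commute. Qed.

Lemma moveR_Top_far t pos s (x : tens) : (t.+2 <= pos)%N || (pos + s < t)%N ->
  moveR pos s (T t x) = T t (moveR pos s x).
Proof.
elim: s pos x => [|s IH] pos x h //=.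
by rewrite (Top_commute_far (p := pos)) ?IH //; lia.
Qed.

Lemma braid_Top_far t p r s (x : tens) : (t.+2 <= p)%N || (p + r + s <= t)%N ->
  braid p r s (T t x) = T t (braid p r s x).
Proof.
elim: r x => [|r IH] x h //=.
by rewrite moveR_Top_far ?IH //; lia.
Qed.

Lemma braid_moveR_far pos s' p r s (x : tens) : (pos + s' < p)%N ->
  braid p r s (moveR pos s' x) = moveR pos s' (braid p r s x).
Proof.
elim: s' pos x => [|s' IH] pos x h //=.
by rewrite IH ?braid_Top_far //; lia.
Qed.

Lemma braid_pullL_far s0 k p r s (x : tens) : (p + r + s <= s0)%N ->
  braid p r s (pullL s0 k x) = pullL s0 k (braid p r s x).
Proof.
elim: k x => [|k IH] x h //=.
by rewrite IH // braid_Top_far //; lia.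
Qed.

Lemma moveR_snoc pos s (x : tens) : moveR pos s.+1 x = T (pos + s) (moveR pos s x).
Proof.
elim: s pos x => [|s IH] pos x; first by rewrite addn0.
by rewrite moveR_S IH moveR_S addSnnS.
Qed.

Lemma moveR_add pos s t (x : tens) : moveR pos (s + t) x = moveR (pos + s) t (moveR pos s x).
Proof.
elim: s pos x => [|s IH] pos x /=; first by rewrite addn0.
by rewrite IH addSnnS.
Qed.

Lemma pullL_add s k1 k2 (x : tens) : pullL s (k1 + k2) x = pullL s k1 (pullL (s + k1) k2 x).
Proof.
elim: k2 x => [|k2 IH] x /=; first by rewrite addn0.
by rewrite addnS /= IH addnA.
Qed.

Lemma braid_first p r s (x : tens) : braid p r.+1 s x = moveR p s (braid p.+1 r s x).
Proof.
elim: r x => [|r IH] x; first by rewrite /= addn0.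
by rewrite braid_S IH [in RHS]braid_S addSnnS.
Qed.

Lemma pullL_braid A B C (x : tens) : pullL (A + C) B (braid A B C x) = braid A B C.+1 x.
Proof.
elim: B x => [|B IH] x //.
rewrite pullL_S !braid_S -(braid_Top_far (t := A + C + B)); last by lia.
by rewrite IH moveR_snoc addnAC.
Qed.

Lemma pullL_braid_right A B C k (x : tens) :
  pullL (A + C) (B + k) (braid A B C x) = braid A B C.+1 (pullL (A + B + C) k x).
Proof. by rewrite pullL_add -braid_pullL_far ?pullL_braid 1?addnAC //; lia. Qed.

Lemma moveR_braid_left A B C k (x : tens) : (k < A)%N ->
  moveR (A + C - (C + k).+1) (C + k) (braid A B C x)
  = braid A.-1 B.+1 C (moveR (A - k.+1) k x).
Proof.
move=> hk; have -> : (A + C - (C + k).+1 = A - k.+1)%N by lia.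
rewrite addnC moveR_add -braid_moveR_far; last by lia.
have -> : (A - k.+1 + k = A.-1)%N by lia.
by case: A hk => [|A] // _; rewrite braid_first.
Qed.

Hypothesis q_neq0 : q != 0.

Lemma moveR_pair_Top r C (x : tens) : (r + C + 2 <= d)%N ->
  moveR r C (moveR r.+1 C (T r x)) = T (r + C) (moveR r C (moveR r.+1 C x)).
Proof.
elim: C r x => [|C IH] r x hd; first by rewrite /= addn0.
rewrite /= -(moveR_Top_far (t := r) (pos := r.+2)); last by lia.
rewrite Top_braid //; last by lia.
rewrite IH; last by lia.
by rewrite -(moveR_Top_far (t := r) (pos := r.+2)) ?addSnnS //; lia.
Qed.

Lemma moveR_Top_inside t pos s (x : tens) :
  (pos < t < pos + s)%N -> (pos + s < d)%N ->
  moveR pos s (T t x) = T t.-1 (moveR pos s x).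
Proof.
elim: s pos x => [|s IH] pos x /andP[h1 h2] hd; first by lia.
case: (eqVneq t pos.+1) => [->|ht] /=.
- case: s IH h2 hd => [|s] IH h2 hd; first by lia.
  rewrite /= -Top_braid //; last by lia.
  by rewrite -(moveR_Top_far (t := pos) (pos := pos.+2)) //; lia.
- rewrite (Top_commute q d (p := pos)); last by lia.
  by rewrite IH //; lia.
Qed.

Lemma braid_Top_left A B C r (x : tens) :
  (A <= r)%N -> (r.+2 <= A + B)%N -> (A + B + C <= d)%N ->
  braid A B C (T r x) = T (r + C) (braid A B C x).
Proof.
elim: B A x => [|B IH] A x h1 h2 hd; first by lia.
rewrite !braid_first; case: (eqVneq r A) => [->|hr].
- case: B IH h2 hd => [|B] IH h2 hd; first by lia.
  rewrite !braid_first braid_Top_far; last by lia.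
  by rewrite moveR_pair_Top //; lia.
- by rewrite IH ?moveR_Top_far //; lia.
Qed.

Lemma braid_Top_right A B C r (x : tens) :
  (A <= r)%N -> (r.+2 <= A + C)%N -> (A + B + C <= d)%N ->
  braid A B C (T (r + B) x) = T r (braid A B C x).
Proof.
elim: B x => [|B IH] x h1 h2 hd /=; first by rewrite addn0.
by rewrite addnS moveR_Top_inside //= ?IH //; lia.
Qed.

Lemma braid_pullL_left A B C k (x : tens) : (k < B)%N -> (A + B + C <= d)%N ->
  braid A B C (pullL A k x) = pullL (A + C) k (braid A B C x).
Proof.
elim: k x => [|k IH] x hk hd //=.
by rewrite IH ?braid_Top_left 1?addnAC //; lia.
Qed.

Lemma braid_moveR_right A B C r k (x : tens) :
  (A <= r)%N -> (r + k < A + C)%N -> (A + B + C <= d)%N ->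
  braid A B C (moveR (r + B) k x) = moveR r k (braid A B C x).
Proof.
elim: k r x => [|k IH] r x h1 h2 hd //=.
by rewrite -addSn IH ?braid_Top_right //; lia.
Qed.

Lemma pullL_braid_left A B C k (x : tens) : (k < B)%N -> (A + B + C <= d)%N ->
  pullL (A + C) k (braid A B C x) = moveR A C (braid A.+1 B.-1 C (pullL A k x)).
Proof.
move=> hk hd; rewrite -braid_pullL_left //.
by case: B hk hd => [|B] // _ _; rewrite braid_first.
Qed.

Lemma moveR_braid_right A B C k (x : tens) : (k < C)%N -> (A + B + C <= d)%N ->
  moveR (A + C - k.+1) k (braid A B C x)
  = pullL (A + C).-1 B (braid A B C.-1 (moveR (A + B + (C - k.+1)) k x)).
Proof.
move=> hk hd; rewrite -braid_moveR_right; [|lia..].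
have -> : (A + C - k.+1 + B = A + B + (C - k.+1))%N by lia.
by case: C hk hd => [|C] // _ _; rewrite -pullL_braid addnS.
Qed.

End BraidCalculus.

Section Relations.
Variables (K : fieldType) (q : K) (n : nat).
Local Notation word := (seq 'I_n).
Local Notation tens := (tens K n).

(* [f] lies in the kernel of V_n^{(x) (a + b)} -> S^a_q(n) (x) Lambda^b_q(n). *)
Definition relspan (a b : nat) (f : tens) : Prop :=
  exists c : (a + b).-tuple 'I_n -> nat -> K, forall u : (a + b).-tuple 'I_n,
    f u = \sum_(w : (a + b).-tuple 'I_n) \sum_(p < a + b) c w p * relgen q a b w p u.

Lemma relspan_cong a b (x y : tens) : relspan a b (fun u => x u - y u) -> cong q a b x y.
Proof. by []. Qed.

Lemma relspan_ext a b (f g : tens) :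
  (forall u, size u = (a + b)%N -> f u = g u) -> relspan a b g -> relspan a b f.
Proof. by move=> fg [c hc]; exists c => u; rewrite fg ?size_tuple. Qed.

Lemma relspan0 a b : relspan a b (fun _ => 0).
Proof.
exists (fun _ _ => 0) => u.
by rewrite big1 // => w _; rewrite big1 // => p _; rewrite mul0r.
Qed.

Lemma relspanD a b (f g : tens) :
  relspan a b f -> relspan a b g -> relspan a b (fun u => f u + g u).
Proof.
move=> [c hc] [c' hc']; exists (fun w p => c w p + c' w p) => u.
rewrite hc hc' -big_split; apply: eq_bigr => w _ /=.
by rewrite -big_split; apply: eq_bigr => p _; rewrite mulrDl.
Qed.

Lemma relspanZ a b k (f : tens) : relspan a b f -> relspan a b (fun u => k * f u).
Proof.
move=> [c hc]; exists (fun w p => k * c w p) => u.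
rewrite hc mulr_sumr; apply: eq_bigr => w _.
by rewrite mulr_sumr; apply: eq_bigr => p _; rewrite mulrA.
Qed.

Lemma relspan_sum a b m (F : nat -> tens) : (forall k, (k < m)%N -> relspan a b (F k)) ->
  relspan a b (fun u => \sum_(k < m) F k u).
Proof.
elim: m => [|m IH] hF.
  by apply: relspan_ext (relspan0 a b) => u _; rewrite big_ord0.
have hFm : relspan a b (F m) by exact: hF.
apply: relspan_ext (relspanD (IH _) hFm) => [u _|k hk]; first by rewrite big_ord_recr.
by apply: hF; lia.
Qed.

Lemma sum_ord_indicator m p (F : nat -> K) : (p < m)%N ->
  \sum_(i < m) (i == p :> nat)%:R * F i = F p.
Proof.
move=> hp; rewrite (bigD1 (Ordinal hp)) //= eqxx mul1r big1 ?addr0 // => i.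
by rewrite -(inj_eq val_inj) /= => /negbTE->; rewrite mul0r.
Qed.

Lemma relspan_at a b p (C : word -> K) (f : tens) : (p < a + b)%N ->
  (forall u : (a + b).-tuple 'I_n,
     f u = \sum_(w : (a + b).-tuple 'I_n) C w * relgen q a b w p u) ->
  relspan a b f.
Proof.
move=> hp hf; exists (fun w p' => (p' == p :> nat)%:R * C w) => u.
rewrite hf; apply: eq_bigr => w _; under eq_bigr do rewrite -mulrA.
by rewrite (sum_ord_indicator (fun i => C w * relgen q a b w i u)).
Qed.

Definition ascent (p : nat) (w : word) : bool :=
  if drop p w is i :: j :: _ then (i < j)%N else false.

Definition plateau (p : nat) (w : word) : bool :=
  if drop p w is i :: j :: _ then i == j else false.

Lemma ascent_cat pre (i j : 'I_n) r : ascent (size pre) (pre ++ i :: j :: r) = (i < j)%N.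
Proof. by rewrite /ascent drop_size_cat. Qed.

Lemma plateau_cat pre (i j : 'I_n) r : plateau (size pre) (pre ++ i :: j :: r) = (i == j).
Proof. by rewrite /plateau drop_size_cat. Qed.

Lemma relgen_sym a b w p u : (p.+2 <= a)%N ->
  relgen q a b w p u = (ascent p w)%:R * (ev K (swap_at p w) u - q * ev K w u).
Proof.
move=> hp; rewrite /relgen /ascent /swap_at /tz hp.
by case: (drop p w) => [|i [|j r]] //=; rewrite ?mul0r //; case: ifP; rewrite ?mul1r ?mul0r.
Qed.

Lemma relgen_wedge a b w p u : (a <= p)%N -> (p.+2 <= a + b)%N ->
  relgen q a b w p u = (ascent p w)%:R * (ev K (swap_at p w) u + q^-1 * ev K w u)
                       + (plateau p w)%:R * ev K w u.
Proof.
move=> h1 h2; rewrite /relgen /ascent /plateau /swap_at /tz.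
case: (drop p w) => [|i [|j r]] /=; rewrite ?mul0r ?addr0 //.
rewrite ifF ?h1 ?h2 /= -?(inj_eq val_inj) /=; last by lia.
by case: ltngtP => [h|h|/val_inj->]; rewrite ?mul0r ?mul1r ?addr0 ?add0r.
Qed.

Hypothesis q_neq0 : q != 0.

Lemma Top_relspan_sym a b p (v : tens) : (p.+2 <= a)%N ->
  relspan a b (fun u => Top q (a + b) p v u - q * v u).
Proof.
move=> hp; pose C w := (ascent p w)%:R * (v w - q^-1 * v (swap_at p w)).
apply: (@relspan_at _ _ p C); first by lia.
move=> u; have split_ev w : C w * relgen q a b w p u
    = C w * (ascent p w)%:R * ev K (swap_at p w) u - q * C w * (ascent p w)%:R * ev K w u.
  by rewrite relgen_sym //; ring.
under eq_bigr do rewrite split_ev.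
rewrite sumrB (sum_ev_swap _ p (fun w => C w * (ascent p w)%:R)).
rewrite (sum_ev _ (fun w => q * C w * (ascent p w)%:R)) size_tuple eqxx.
case: (word_atP p u) => [pre i j r hpre Eu|]; last by rewrite size_tuple; lia.
have hd : (size pre + size r)%N.+2 = (a + b)%N by rewrite -(size_tuple u) Eu size_cat /=; lia.
rewrite /C Eu -hpre Top_cat // !swap_at_cat // !ascent_cat /rdiag -(inj_eq val_inj) /=.
by case: ltngtP => _ /=; field.
Qed.

Lemma Top_relspan_wedge a b p (v : tens) : (a <= p)%N -> (p.+2 <= a + b)%N ->
  relspan a b (fun u => Top q (a + b) p v u + q^-1 * v u).
Proof.
move=> hap hpb; pose C w := (ascent p w)%:R * (v w + q * v (swap_at p w))
                            + (plateau p w)%:R * (q + q^-1) * v w.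
apply: (@relspan_at _ _ p C); first by lia.
move=> u; have split_ev w : C w * relgen q a b w p u
    = C w * (ascent p w)%:R * ev K (swap_at p w) u
      + C w * ((ascent p w)%:R * q^-1 + (plateau p w)%:R) * ev K w u.
  by rewrite relgen_wedge //; ring.
under eq_bigr do rewrite split_ev.
rewrite big_split (sum_ev_swap _ p (fun w => C w * (ascent p w)%:R)).
rewrite (sum_ev _ (fun w => C w * ((ascent p w)%:R * q^-1 + (plateau p w)%:R))).
rewrite size_tuple eqxx.
case: (word_atP p u) => [pre i j r hpre Eu|]; last by rewrite size_tuple; lia.
have hd : (size pre + size r)%N.+2 = (a + b)%N by rewrite -(size_tuple u) Eu size_cat /=; lia.
rewrite /C Eu -hpre Top_cat // !swap_at_cat // !ascent_cat !plateau_cat.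
rewrite /rdiag -!(inj_eq val_inj) /=.
by case: ltngtP => [_|_|/val_inj->] /=; rewrite ?eqxx ?ltnn /=; field.
Qed.

Lemma moveR_relspan a b d A C (v : tens) : (a + b)%N = d -> (A + C < a)%N ->
  relspan a b (fun u => moveR q d A C v u - q ^+ C * v u).
Proof.
move=> <-; elim: C A v => [|C IH] A v h.
  by apply: relspan_ext (relspan0 a b) => u _; rewrite expr0 mul1r subrr.
apply: relspan_ext (relspanD (IH A.+1 (Top q (a + b) A v) _)
                     (relspanZ (q ^+ C) (@Top_relspan_sym a b A v _))) => [u _||]; try lia.
by rewrite exprS /=; ring.
Qed.

Lemma pullL_relspan a b d s k (v : tens) : (a + b)%N = d -> (a <= s)%N -> (s + k < a + b)%N ->
  relspan a b (fun u => pullL q d s k v u - (- q^-1) ^+ k * v u).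
Proof.
move=> <-; elim: k v => [|k IH] v h1 h2.
  by apply: relspan_ext (relspan0 a b) => u _; rewrite expr0 mul1r subrr.
apply: relspan_ext (relspanD (IH (Top q (a + b) (s + k) v) h1 _)
                     (relspanZ ((- q^-1) ^+ k) (@Top_relspan_wedge a b (s + k) v _ _)))
  => [u _|||]; try lia.
by rewrite exprS /=; ring.
Qed.

End Relations.

Section Products.
Variables (K : fieldType) (q : K) (n : nat).
Local Notation word := (seq 'I_n).
Local Notation tens := (tens K n).

(* Tensors are functions on all words: only their values on words of length
   [d] are the coordinates of an element of V_n^{(x) d}. *)
Definition agree (d : nat) (x y : tens) : Prop := forall u : word, size u = d -> x u = y u.

Lemma Top_agree d p (x y : tens) : agree d x y -> Top q d p x = Top q d p y.
Proof.
move=> xy; apply: functional_extensionality => u.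
by rewrite !TopE; case: eqP => // hu; rewrite !xy ?size_swap_at.
Qed.

Lemma moveR_agree d pos s (x y : tens) :
  agree d x y -> agree d (moveR q d pos s x) (moveR q d pos s y).
Proof. by case: s => [|s] //= /(Top_agree pos) ->. Qed.

Lemma pullL_agree d s k (x y : tens) :
  agree d x y -> agree d (pullL q d s k x) (pullL q d s k y).
Proof. by case: k => [|k] //= /(Top_agree (s + k)) ->. Qed.

Lemma braid_agree d p r s (x y : tens) :
  agree d x y -> agree d (braid q d p r s x) (braid q d p r s y).
Proof. by elim: r x y => [|r IH] x y xy //=; apply/IH/moveR_agree. Qed.

Lemma Top_sum d p m (c : nat -> K) (F : nat -> tens) :
  Top q d p (fun u => \sum_(k < m) c k * F k u)
  = fun u => \sum_(k < m) c k * Top q d p (F k) u.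
Proof.
apply: functional_extensionality => u; rewrite TopE; under [RHS]eq_bigr do rewrite TopE.
case: eqP => _; last by rewrite big1 // => k; rewrite mulr0.
by rewrite !mulr_sumr -big_split /=; apply: eq_bigr => k _; ring.
Qed.

Lemma moveR_sum d pos s m (c : nat -> K) (F : nat -> tens) :
  moveR q d pos s (fun u => \sum_(k < m) c k * F k u)
  = fun u => \sum_(k < m) c k * moveR q d pos s (F k) u.
Proof.
by elim: s pos F => [|s IH] pos F //=; rewrite Top_sum (IH _ (fun k => Top q d pos (F k))).
Qed.

Lemma braid_sum d p r s m (c : nat -> K) (F : nat -> tens) :
  braid q d p r s (fun u => \sum_(k < m) c k * F k u)
  = fun u => \sum_(k < m) c k * braid q d p r s (F k) u.
Proof.
by elim: r F => [|r IH] F //=; rewrite moveR_sum (IH (fun k => moveR q d (p + r) s (F k))).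
Qed.

Lemma pushR_moveR d s k (x : tens) : (k < s)%N -> pushR q d s k x = moveR q d (s - k.+1) k x.
Proof.
elim: k x => [|k IH] x hk //=.
by rewrite IH 1?subnSK //; lia.
Qed.

Lemma kappaE s m (x : tens) :
  kappa q s m x = fun u => \sum_(k < m) (- q^-1) ^+ k * pullL q (s + m) s k x u.
Proof.
case: m => [|m] //; apply: functional_extensionality => u.
by rewrite big_ord0.
Qed.

Lemma deltaE s m (x : tens) :
  delta q s m x = fun u => \sum_(k < s) q ^+ k * moveR q (s + m) (s - k.+1) k x u.
Proof.
apply: functional_extensionality => u; case: s => [|s] /=; first by rewrite big_ord0.
by apply: eq_bigr => k _; rewrite pushR_moveR.
Qed.

Lemma Top_tensorl d D p (x y : tens) : (p.+2 <= D)%N -> (D <= d)%N ->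
  agree d (Top q d p (tensor D x y)) (tensor D (Top q D p x) y).
Proof.
move=> hpD hDd u hu; case: (word_atP p u) => [pre i j r hp Eu|]; last by lia.
subst u p; rewrite size_cat /= in hu.
have D_pre : (D - size pre = (D - (size pre).+2).+2)%N by lia.
have take_pre a b : take D (pre ++ a :: b :: r) = pre ++ a :: b :: take (D - (size pre).+2) r.
  by rewrite take_cat ifF ?D_pre //; lia.
have drop_pre a b : drop D (pre ++ a :: b :: r) = drop (D - (size pre).+2) r.
  by rewrite drop_cat ifF ?D_pre //; lia.
rewrite /tensor Top_cat; last by lia.
by rewrite !take_pre !drop_pre Top_cat ?size_takel; [ring | lia..].
Qed.

Lemma Top_tensorr d D p (x y : tens) : (D <= p)%N ->
  agree d (Top q d p (tensor D x y)) (tensor D x (Top q (d - D) (p - D) y)).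
Proof.
move=> hDp u hu; case: (word_atP p u) => [pre i j r hp Eu|]; last first.
  move=> hs; rewrite /tensor !Top_short ?size_drop ?hu ?eqxx //; lia.
subst u p; rewrite size_cat /= in hu.
have Epre : pre = take D pre ++ drop D pre by rewrite cat_take_drop.
have size_take_pre : size (take D pre) = D by rewrite size_takel.
have split_at a b : pre ++ a :: b :: r = take D pre ++ (drop D pre ++ a :: b :: r).
  by rewrite catA -Epre.
rewrite /tensor Top_cat; last by lia.
rewrite !split_at !take_size_cat // !drop_size_cat // -size_drop Top_cat; first by ring.
by rewrite size_drop; lia.
Qed.

Lemma pullL_tensorl d D s k (x y : tens) : (s + k < D)%N -> (D <= d)%N ->
  agree d (pullL q d s k (tensor D x y)) (tensor D (pullL q D s k x) y).
Proof.
elim: k x => [|k IH] x hk hD u hu //=.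
by rewrite (pullL_agree s k (Top_tensorl x y _ _)) ?IH //; lia.
Qed.

Lemma pullL_tensorr d D s k (x y : tens) : (D <= s)%N ->
  agree d (pullL q d s k (tensor D x y)) (tensor D x (pullL q (d - D) (s - D) k y)).
Proof.
elim: k y => [|k IH] y hD u hu //=.
rewrite (pullL_agree s k (Top_tensorr x y _)) ?IH //; last by lia.
by rewrite addnBAC.
Qed.

Lemma moveR_tensorl d D pos s (x y : tens) : (pos + s < D)%N -> (D <= d)%N ->
  agree d (moveR q d pos s (tensor D x y)) (tensor D (moveR q D pos s x) y).
Proof.
elim: s pos x => [|s IH] pos x hs hD u hu //=.
by rewrite (moveR_agree pos.+1 s (Top_tensorl x y _ _)) ?IH //; lia.
Qed.

Lemma moveR_tensorr d D pos s (x y : tens) : (D <= pos)%N ->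
  agree d (moveR q d pos s (tensor D x y)) (tensor D x (moveR q (d - D) (pos - D) s y)).
Proof.
elim: s pos y => [|s IH] pos y hD u hu //=.
rewrite (moveR_agree pos.+1 s (Top_tensorr x y _)) ?IH //; last by lia.
by rewrite subSn.
Qed.

Lemma Kmul_suml p r s t m (c : nat -> K) (F : nat -> tens) (y : tens) :
  Kmul q p r s t (fun u => \sum_(k < m) c k * F k u) y
  = fun u => \sum_(k < m) c k * Kmul q p r s t (F k) y u.
Proof.
rewrite /Kmul -(braid_sum _ _ _ _ _ c (fun k => tensor (p + r) (F k) y)); congr braid.
apply: functional_extensionality => u.
by rewrite /tensor mulr_suml; apply: eq_bigr => k _; rewrite mulrA.
Qed.

Lemma Kmul_sumr p r s t m (c : nat -> K) (x : tens) (F : nat -> tens) :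
  Kmul q p r s t x (fun u => \sum_(k < m) c k * F k u)
  = fun u => \sum_(k < m) c k * Kmul q p r s t x (F k) u.
Proof.
rewrite /Kmul -(braid_sum _ _ _ _ _ c (fun k => tensor (p + r) x (F k))); congr braid.
apply: functional_extensionality => u.
by rewrite /tensor mulr_sumr; apply: eq_bigr => k _; rewrite mulrCA.
Qed.

End Products.

Lemma sumr_split_ordC (K : nmodType) m1 m2 (F : nat -> K) :
  \sum_(k < m1 + m2) F k = \sum_(k < m2) F k + \sum_(k < m1) F (m2 + k)%N.
Proof. by rewrite addnC big_split_ord. Qed.

Section Leibniz.
Variables (K : fieldType) (q : K) (n : nat).
Variables (A B C D : nat) (x y : tens K n).
Local Notation d := (A + B + C + D)%N.
Local Notation xy := (Kmul q A B C D x y).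

Lemma pullL_Kmul_right k : (k < D)%N ->
  agree d (pullL q d (A + C) (B + k) xy) (Kmul q A B C.+1 D.-1 x (pullL q (C + D) C k y)).
Proof.
move=> hk; rewrite /Kmul pullL_braid_right //.
have -> : (A + B + C.+1 + D.-1 = d)%N by lia.
apply/braid_agree => u hu; rewrite pullL_tensorr //; last by lia.
by rewrite (_ : d - (A + B) = C + D)%N ?addKn //; lia.
Qed.

Lemma moveR_Kmul_left k : (k < A)%N ->
  agree d (moveR q d (A + C - (C + k).+1) (C + k) xy)
          (Kmul q A.-1 B.+1 C D (moveR q (A + B) (A - k.+1) k x) y).
Proof.
move=> hk; rewrite /Kmul moveR_braid_left //.
have -> : (A.-1 + B.+1 = A + B)%N by lia.
by apply/braid_agree => u hu; rewrite moveR_tensorl //; lia.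
Qed.

Hypothesis q_neq0 : q != 0.

Lemma pullL_Kmul_left k : (k < B)%N ->
  agree d (pullL q d (A + C) k xy)
          (moveR q d A C (Kmul q A.+1 B.-1 C D (pullL q (A + B) A k x) y)).
Proof.
move=> hk; rewrite /Kmul pullL_braid_left //; last by lia.
have -> : (A.+1 + B.-1 = A + B)%N by lia.
by apply/moveR_agree/braid_agree => u hu; rewrite pullL_tensorl //; lia.
Qed.

Lemma moveR_Kmul_right k : (k < C)%N ->
  agree d (moveR q d (A + C - k.+1) k xy)
          (pullL q d (A + C).-1 B (Kmul q A B C.-1 D.+1 x (moveR q (C + D) (C - k.+1) k y))).
Proof.
move=> hk; rewrite /Kmul moveR_braid_right //; last by lia.
have -> : (A + B + C.-1 + D.+1 = d)%N by lia.
apply/pullL_agree/braid_agree => u hu; rewrite moveR_tensorr //; last by lia.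
by rewrite (_ : d - (A + B) = C + D)%N ?addKn //; lia.
Qed.

Lemma kappa_Kmul :
  cong q (A + C).+1 (B + D).-1 (kappa q (A + C) (B + D) xy)
    (fun u => q ^+ C * Kmul q A.+1 B.-1 C D (kappa q A B x) y u
            + (- q^-1) ^+ B * Kmul q A B C.+1 D.-1 x (kappa q C D y) u).
Proof.
rewrite !kappaE; set c := - q^-1.
pose W k := Kmul q A.+1 B.-1 C D (pullL q (A + B) A k x) y.
pose V k := Kmul q A B C.+1 D.-1 x (pullL q (C + D) C k y).
rewrite (Kmul_suml q _ _ _ _ _ (fun k => c ^+ k) (fun k => pullL q (A + B) A k x)).
rewrite (Kmul_sumr q _ _ _ _ _ (fun k => c ^+ k) x (fun k => pullL q (C + D) C k y)).
apply: relspan_cong; have [BD0|BD_gt0] := posnP (B + D).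
  apply: relspan_ext (relspan0 q n _ _) => u _.
  have [-> ->] : B = 0%N /\ D = 0%N by lia.
  by rewrite !big_ord0; ring.
apply: relspan_ext (relspan_sum (m := B)
    (F := fun k u => c ^+ k * (moveR q d A C (W k) u - q ^+ C * W k u)) _)
  => [u hu | k hk].
- have {}hu : size u = d by lia.
  rewrite (_ : A + C + (B + D) = d)%N; last by lia.
  have terms_left : \sum_(k < B) c ^+ k * pullL q d (A + C) k xy u
             = \sum_(k < B) c ^+ k * moveR q d A C (W k) u.
    by apply: eq_bigr => k _; rewrite pullL_Kmul_left.
  have terms_right : \sum_(k < D) c ^+ (B + k) * pullL q d (A + C) (B + k) xy u
              = c ^+ B * \sum_(k < D) c ^+ k * V k u.
    by rewrite mulr_sumr; apply: eq_bigr => k _; rewrite pullL_Kmul_right // exprD mulrA.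
  have sum_diff : \sum_(k < B) c ^+ k * (moveR q d A C (W k) u - q ^+ C * W k u)
      = \sum_(k < B) c ^+ k * moveR q d A C (W k) u - q ^+ C * \sum_(k < B) c ^+ k * W k u.
    by rewrite mulr_sumr -sumrB; apply: eq_bigr => k _; ring.
  by rewrite big_split_ord /= terms_left terms_right sum_diff /W /V; ring.
- by apply/relspanZ/moveR_relspan; lia.
Qed.

Lemma delta_Kmul :
  cong q (A + C).-1 (B + D).+1 (delta q (A + C) (B + D) xy)
    (fun u => q ^+ C * Kmul q A.-1 B.+1 C D (delta q A B x) y u
            + (- q^-1) ^+ B * Kmul q A B C.-1 D.+1 x (delta q C D y) u).
Proof.
rewrite !deltaE; set c := - q^-1.
pose U k := Kmul q A.-1 B.+1 C D (moveR q (A + B) (A - k.+1) k x) y.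
pose V k := Kmul q A B C.-1 D.+1 x (moveR q (C + D) (C - k.+1) k y).
rewrite (Kmul_suml q _ _ _ _ _ (fun k => q ^+ k) (fun k => moveR q (A + B) (A - k.+1) k x)).
rewrite (Kmul_sumr q _ _ _ _ _ (fun k => q ^+ k) x (fun k => moveR q (C + D) (C - k.+1) k y)).
apply: relspan_cong; have [AC0|AC_gt0] := posnP (A + C).
  apply: relspan_ext (relspan0 q n _ _) => u _.
  have [-> ->] : A = 0%N /\ C = 0%N by lia.
  by rewrite !big_ord0; ring.
apply: relspan_ext (relspan_sum (m := C)
    (F := fun k u => q ^+ k * (pullL q d (A + C).-1 B (V k) u - c ^+ B * V k u)) _)
  => [u hu | k hk].
- have {}hu : size u = d by lia.
  rewrite (_ : A + C + (B + D) = d)%N; last by lia.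
  rewrite (@sumr_split_ordC _ A C (fun k => q ^+ k * moveR q d (A + C - k.+1) k xy u)).
  have terms_right : \sum_(k < C) q ^+ k * moveR q d (A + C - k.+1) k xy u
              = \sum_(k < C) q ^+ k * pullL q d (A + C).-1 B (V k) u.
    by apply: eq_bigr => k _; rewrite moveR_Kmul_right.
  have terms_left : \sum_(k < A) q ^+ (C + k) * moveR q d (A + C - (C + k).+1) (C + k) xy u
             = q ^+ C * \sum_(k < A) q ^+ k * U k u.
    by rewrite mulr_sumr; apply: eq_bigr => k _; rewrite moveR_Kmul_left // exprD mulrA.
  have sum_diff : \sum_(k < C) q ^+ k * (pullL q d (A + C).-1 B (V k) u - c ^+ B * V k u)
             = \sum_(k < C) q ^+ k * pullL q d (A + C).-1 B (V k) u
               - c ^+ B * \sum_(k < C) q ^+ k * V k u.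
    by rewrite mulr_sumr -sumrB; apply: eq_bigr => k _; ring.
  by rewrite terms_left terms_right sum_diff /U /V; ring.
- by apply/relspanZ/pullL_relspan; lia.
Qed.

End Leibniz.

Theorem proposition5p3 (K : fieldType) (q : K) (l n : nat) :
  l.-primitive_root q -> odd l -> (1 < l)%N -> (0 < n)%N ->
  (* Koszul differential kappa on K^i_{d1} = S^i (x) Lambda^{d1-i}, etc. *)
  (forall (d1 d2 i j : nat) (x y : tens K n),
     (i <= d1)%N -> (j <= d2)%N ->
     cong q (i + j).+1 (d1 + d2 - (i + j)).-1
       (kappa q (i + j) (d1 + d2 - (i + j)) (Kmul q i (d1 - i) j (d2 - j) x y))
       (fun u =>
          q ^+ j * Kmul q i.+1 (d1 - i).-1 j (d2 - j) (kappa q i (d1 - i) x) y u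
          + (- q^-1) ^+ (d1 - i)
              * Kmul q i (d1 - i) j.+1 (d2 - j).-1 x (kappa q j (d2 - j) y) u))
  /\
  (* de Rham differential delta on Omega^i_{d1} = S^{d1-i} (x) Lambda^i, etc. *)
  (forall (d1 d2 i j : nat) (x y : tens K n),
     (i <= d1)%N -> (j <= d2)%N ->
     cong q (d1 - i + (d2 - j)).-1 (i + j).+1
       (delta q (d1 - i + (d2 - j)) (i + j) (Kmul q (d1 - i) i (d2 - j) j x y))
       (fun u =>
          q ^+ (d2 - j) * Kmul q (d1 - i).-1 i.+1 (d2 - j) j (delta q (d1 - i) i x) y u
          + (- q^-1) ^+ i
              * Kmul q (d1 - i) i (d2 - j).-1 j.+1 x (delta q (d2 - j) j y) u)).
Proof.
move=> q_prim _ _ _.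
have q_neq0 : q != 0.
  apply/eqP => q0; move: (prim_expr_order q_prim); rewrite q0 expr0n eqn0Ngt.
  by rewrite (prim_order_gt0 q_prim) /= => /eqP; rewrite eq_sym oner_eq0.
split=> d1 d2 i j x y hi hj.
- rewrite (_ : d1 + d2 - (i + j) = d1 - i + (d2 - j))%N; last by lia.
  exact: kappa_Kmul.
- exact: delta_Kmul.
Qed.
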